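(* Let $X$ be a finite set of proposals with $|X|\geq 3$. No divisiveness selection function $\Delta$ on $X$ satisfies both Pareto Efficiency and Weak Position Unanimity.
   Context: $X!$ is the set of strict linear orders on $X$; a profile is a function $R:N\to X!$ with $N\subset\mathbb{N}$ finite and nonempty. A divisiveness selection function (DSF) maps every profile to a nonempty subset of $X$. A proposal $x$ occurs in the same position throughout $R$ if the number of proposals ranked above $x$ is the same in every agent's ranking. A proposal $x$ is Pareto-dominated in $R$ if there is a proposal $y$ that every agent in $N$ ranks above $x$. Pareto Efficiency: $x\notin\Delta(R)$ for every profile $R$ and every Pareto-dominated proposal $x$ in $R$. Weak Position Unanimity: for every profile $R$ and every proposal $x$ occurring in the same position throughout $R$, either $x\notin\Delta(R)$ or $\Delta(R)=X$. *)

From mathcomp Require Import all_boot.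
From mathcomp Require Export finmap.
Set Implicit Arguments. Unset Strict Implicit. Unset Printing Implicit Defensive.
Local Open Scope fset_scope.

(* [r y x] reads: "y is ranked above x". *)
Definition strict_linear_order (X : finType) (r : rel X) : Prop :=
  irreflexive r /\ transitive r /\ (forall x y : X, x != y -> r x y || r y x).

Definition is_profile (X : finType) (N : {fset nat}) (R : N -> rel X) : Prop :=
  forall i : N, strict_linear_order (R i).

Definition selection_fun (X : finType) := forall N : {fset nat}, (N -> rel X) -> {set X}.

Definition is_DSF (X : finType) (D : selection_fun X) : Prop :=
  forall (N : {fset nat}) (R : N -> rel X),
    N != fset0 -> is_profile R -> D N R != set0.

Definition position (X : finType) (r : rel X) (x : X) : nat := #|[pred y | r y x]|.

Definition same_position (X : finType) (N : {fset nat}) (R : N -> rel X) (x : X) : Prop :=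
  forall i j : N, position (R i) x = position (R j) x.

Definition pareto_dominated (X : finType) (N : {fset nat}) (R : N -> rel X) (x : X) : Prop :=
  exists y : X, forall i : N, R i y x.

Definition pareto_efficiency (X : finType) (D : selection_fun X) : Prop :=
  forall (N : {fset nat}) (R : N -> rel X), N != fset0 -> is_profile R ->
    forall x : X, pareto_dominated R x -> x \notin D N R.

Definition weak_position_unanimity (X : finType) (D : selection_fun X) : Prop :=
  forall (N : {fset nat}) (R : N -> rel X), N != fset0 -> is_profile R ->
    forall x : X, same_position R x -> x \notin D N R \/ D N R = [set: X].

(* With a single agent every proposal trivially occurs in the same position, so
   Weak Position Unanimity and nonemptiness force Delta(R) = X; but the agent's
   last-ranked proposal is Pareto-dominated, contradicting Pareto Efficiency.
   Only two proposals are needed. *)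

From mathcomp Require Import all_boot finmap.

Set Implicit Arguments. Unset Strict Implicit. Unset Printing Implicit Defensive.

Local Open Scope fset_scope.

Definition rank_lt (X : finType) : rel X :=
  fun y x => (enum_rank y < enum_rank x)%N.

Lemma rank_lt_strict_linear_order (X : finType) : strict_linear_order (@rank_lt X).
Proof.
split; first by move=> x; rewrite /rank_lt ltnn.
split; first by move=> y x z; apply: ltn_trans.
move=> x y; apply: contraNT; rewrite /rank_lt negb_or -!leqNgt -eqn_leq.
by move/eqP/val_inj/enum_rank_inj->.
Qed.

Lemma strict_linear_order_has_related (X : finType) (r : rel X) :
  strict_linear_order r -> (1 < #|X|)%N -> exists x y, r y x.
Proof.
move=> [_ [_ total]] /card_gt1P [a [b [_ _ /total /orP [rab | rba]]]].
- by exists b, a.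
- by exists a, b.
Qed.

Section ConstantProfile.

Variables (X : finType) (N : {fset nat}) (r : rel X).

Lemma const_profile : strict_linear_order r -> is_profile (fun _ : N => r).
Proof. by move=> order i. Qed.

Lemma same_position_const (x : X) : same_position (fun _ : N => r) x.
Proof. by []. Qed.

Lemma pareto_dominated_const (x y : X) : r y x -> pareto_dominated (fun _ : N => r) x.
Proof. by move=> ryx; exists y. Qed.

End ConstantProfile.

Lemma DSF_weak_position_unanimity_full (X : finType) (D : selection_fun X)
    (N : {fset nat}) (R : N -> rel X) :
  is_DSF D -> weak_position_unanimity D -> N != fset0 -> is_profile R ->
  (forall x, same_position R x) -> D N R = [set: X].
Proof.
move=> hD hW hN hR same.
have /set0Pn [x xD] := hD N R hN hR.
by case: (hW N R hN hR x (same x)); rewrite ?xD.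
Qed.

Lemma no_pareto_weak_position_unanimity_DSF (X : finType) :
  (1 < #|X|)%N ->
  ~ (exists D : selection_fun X,
       [/\ is_DSF D, pareto_efficiency D & weak_position_unanimity D]).
Proof.
move=> hX [D [hD hP hW]].
pose N := [fset 0%N].
have hN : N != fset0 by apply/fset0Pn; exists 0%N; rewrite inE.
have order := @rank_lt_strict_linear_order X.
have hR := const_profile (N := N) order.
have full := DSF_weak_position_unanimity_full hD hW hN hR (same_position_const _).
have [x [y ryx]] := strict_linear_order_has_related order hX.
by have := hP N _ hN hR x (pareto_dominated_const N ryx); rewrite full inE.
Qed.

Theorem theorem1 (X : finType) (hX : 3 <= #|X|) :
  ~ (exists D : selection_fun X,
       [/\ is_DSF D, pareto_efficiency D & weak_position_unanimity D]).
Proof. exact/no_pareto_weak_position_unanimity_DSF/(leq_trans _ hX). Qed.
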